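(* Let $G$ be a connected bipartite graph with color classes $E$ and $V$, $\Gamma$ a spanning tree of $G$ inducing the hypertree $\mathbf f$ of $(V,E)$, and $\mathbf f^+=\mathbf f+\frac1{|E|}\mathbf i_E\in\mathbf R^E$. For each $v\in V$ and each edge $\varepsilon$ of $\Gamma$ adjacent to $v$, let $E_{v,\varepsilon}$ be the set of elements of $E$ whose path in $\Gamma$ from $v$ starts with $\varepsilon$, and set $w(\varepsilon)=|E_{v,\varepsilon}|/|E|$ (each edge has a unique endpoint in $V$, so $w$ is well defined on edges of $\Gamma$). Then for each $v$ the weights $w(\varepsilon)$ over edges $\varepsilon$ of $\Gamma$ at $v$ are non-negative and sum to $1$, so $\sum_{v\in V}\sum_{\varepsilon\ni v}w(\varepsilon)\,\mathbf i_{\{e_\varepsilon\}}$ is a point of the Minkowski cell $M_\Gamma$, and this point equals $\mathbf f^+$; that is, these weights are the barycentric coordinates (in the direct sum decomposition of $M_\Gamma$) of $\mathbf f^+$.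
   Context: A hypertree induced by a spanning tree $\Gamma$ is the function $\mathbf f\colon E\to\mathbf N$ with $\mathbf f(e)+1$ equal to the degree of $e$ in $\Gamma$. $\mathbf i_S$ is the indicator vector of $S$. For $v\in V$, $\Delta^\Gamma_v=\operatorname{conv}\{\mathbf i_{\{e\}}\mid ev\text{ an edge of }\Gamma\}\subset\mathbf R^E$, and $M_\Gamma=\sum_{v\in V}\Delta^\Gamma_v$ (Minkowski sum), which is a direct sum: each point has a unique representation as a sum of one point from each $\Delta^\Gamma_v$. A point of $\Delta^\Gamma_v$ is described by barycentric weights on the edges of $\Gamma$ at $v$; $e_\varepsilon\in E$ denotes the endpoint of $\varepsilon$ in $E$. *)

From mathcomp Require Import all_boot all_order all_algebra.
Set Implicit Arguments. Unset Strict Implicit. Unset Printing Implicit Defensive.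
Import Order.TTheory GRing.Theory Num.Theory.

(* A bipartite graph with colour classes E and V is given by its edge set,
   a set of pairs (e, v) : E * V.  Its vertices are E + V. *)

Section BipGraph.
Variables (E V : finType).

Definition badj (H : {set E * V}) : rel (E + V) :=
  fun x y => match x, y with
             | inl e, inr v => (e, v) \in H
             | inr v, inl e => (e, v) \in H
             | _, _ => false
             end.

Definition bconnected (H : {set E * V}) : Prop :=
  forall x y : E + V, connect (badj H) x y.

Definition has_cycle (H : {set E * V}) : Prop :=
  exists (x : E + V) (p : seq (E + V)),
    [/\ uniq (x :: p), 2 <= size p, path (badj H) x p & badj H (last x p) x].

Definition spanning_tree (G Gamma : {set E * V}) : Prop :=
  [/\ Gamma \subset G, bconnected Gamma & ~ has_cycle Gamma].

Definition degE (Gamma : {set E * V}) (e : E) : nat := #|[set v | (e, v) \in Gamma]|.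

(* hypertree induced by Gamma: f(e) + 1 = deg_Gamma(e) *)
Definition hypertree_of (Gamma : {set E * V}) (e : E) : nat := (degE Gamma e).-1.

(* S is E_{v,eps} for eps = (e0, v): the set of e in E such that the path
   in Gamma from v to e starts with the edge eps (i.e. its first step is to e0). *)
Definition path_start_set (Gamma : {set E * V}) (v : V) (e0 : E) (S : {set E}) : Prop :=
  forall e : E, e \in S <->
    exists p : seq (E + V),
      [/\ uniq (inr v :: p), path (badj Gamma) (inr v) p,
          head (inr v) p = inl e0 & last (inr v) p = inl e].

End BipGraph.

(* In a tree, removing an edge {x, z} splits the vertices into two sides: every vertex y is
   reached from x through z or from z through x, but not both.  For fixed v the sets E_{v,eps}
   are therefore a partition of E, so the weights at v sum to 1.  For fixed e', the element e'
   lies in E_{v,(e',v)} for every neighbour v of e', while any other e misses exactly one of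
   them (the one through the first step from e' towards e); hence
   sum_v |E_{v,(e',v)}| = deg(e') |E| - (|E| - 1) = f(e') |E| + 1, which is |E| f^+(e'). *)

From mathcomp Require Import all_boot all_order all_algebra.
From mathcomp Require Import zify.
From Stdlib Require Import FunctionalExtensionality.
Set Implicit Arguments. Unset Strict Implicit. Unset Printing Implicit Defensive.
Import Order.TTheory GRing.Theory Num.Theory.

Lemma sum_card_exchange (I J : finType) (P : pred I) (A : I -> {set J}) :
  (\sum_(i | P i) #|A i| = \sum_j #|[set i | P i & j \in A i]|)%N.
Proof.
under eq_bigr do rewrite -sum1_card big_mkcond /=.
rewrite exchange_big; apply: eq_bigr => j _.
rewrite -sum1_card big_mkcond [RHS]big_mkcond; apply: eq_bigr => i _.
by rewrite inE; case: (P i).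
Qed.

Lemma big_mul_delta (R : pzSemiRingType) (I : finType) (P : pred I) (F : I -> R) j :
  (\sum_(i | P i) F i * (i == j)%:R = if P j then F j else 0)%R.
Proof.
rewrite big_mkcond (bigD1 j) //= eqxx mulr1 big1 ?addr0 // => i /negbTE ij.
by rewrite ij mulr0; case: (P i).
Qed.

Section SimplePaths.
Variables (T : finType) (r : rel T).

Definition first_step (x y z : T) : Prop :=
  exists p : seq T, [/\ uniq (x :: p), path r x p, head x p = z & last x p = y].

Lemma uniq_last_eq (x : T) p : uniq (x :: p) -> (last x p == x) = (p == [::]).
Proof.
case: p => [|a p] /=; first by rewrite eqxx.
by case: eqP => // <-; rewrite mem_last.
Qed.

Lemma first_step_refl x z : first_step x x z -> z = x.
Proof. by case=> p [up _ <- /eqP]; rewrite uniq_last_eq // => /eqP ->. Qed.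

Lemma first_step_edge x z : x != z -> r x z -> first_step x z z.
Proof. by move=> xz rxz; exists [:: z]; rewrite /= inE xz rxz. Qed.

Lemma first_step_adj x y z : x != y -> first_step x y z -> r x z.
Proof.
move=> xy [[|a p] [_ pp <- ly]]; first by rewrite -ly eqxx in xy.
by case/andP: pp.
Qed.

Lemma first_step_exists x y : connect r x y -> exists z, first_step x y z.
Proof.
case/connectP => p pp ->; case: (shortenP pp) => q pq uq _.
by exists (head x q), q.
Qed.

Lemma first_step_prefix x p u :
  uniq (x :: p) -> path r x p -> u \in p -> first_step x u (head x p).
Proof.
move=> up pp pu; exists (take (index u p).+1 p); split.
- exact: (take_uniq (index u p).+2 up).
- exact: take_path.
- by case: p {up pp} pu.
- by rewrite (take_nth u) ?index_mem // last_rcons nth_index.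
Qed.

Hypothesis rsym : symmetric r.

(* Glue the first path to the reverse of the second one, cut at the first vertex of p
   that also lies on q. *)
Lemma diverging_paths_cycle x p q :
  uniq (x :: p) -> uniq (x :: q) -> path r x p -> path r x q ->
  p != [::] -> q != [::] -> last x p = last x q -> head x p != head x q ->
  exists c, [/\ uniq (x :: c), 1 < size c, path r x c & r (last x c) x].
Proof.
move=> up uq pp pq np nq el hne.
have yp : last x p \in p by case: p np {up pp el hne} => //= a s _; exact: mem_last.
have hasp : has (mem q) p.
  apply/hasP; exists (last x p) => //; rewrite el.
  by case: q nq {uq pq el hne} => //= a s _; exact: mem_last.
set i := find (mem q) p; set z := nth x p i; set j := index z q.
have ilt : i < size p by rewrite -has_find.
have zq : z \in q by exact: (nth_find x hasp).
have jlt : j < size q by rewrite index_mem.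
have tp : take i.+1 p = rcons (take i p) z by rewrite (take_nth x ilt).
have tq : take j.+1 q = rcons (take j q) z by rewrite (take_nth x jlt) nth_index.
exists (take i.+1 p ++ rev (take j q)).
have : path r x (rcons (take i.+1 p ++ rev (take j q)) x).
  rewrite rcons_cat cat_path take_path //= tp last_rcons.
  have := take_path j.+1 pq; rewrite tq -rev_path last_rcons belast_rcons rev_cons.
  by rewrite (@eq_path _ _ r) // => a b; rewrite rsym.
rewrite rcons_path => /andP [pc ec]; split => //.
- rewrite -cat_cons cat_uniq (take_uniq i.+2 up) rev_uniq take_uniq ?andbT; last first.
    by case/andP: uq.
  apply/hasP => -[t]; rewrite mem_rev => tj.
  have tq' : t \in q := mem_take tj.
  rewrite inE => /orP [/eqP tx | ]; first by move: uq; rewrite /= -tx tq'.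
  rewrite tp mem_rcons inE => /orP [/eqP tz | ti].
    by move: tj; rewrite tz in_take // ltnn.
  have : has (mem q) (take i p) by apply/hasP; exists t.
  by rewrite has_take // ltnn.
- rewrite size_cat size_rev !size_takel ?(ltnW jlt) // addSn ltnS lt0n addn_eq0.
  apply: contra hne => /andP [/eqP i0 /eqP j0].
  by rewrite -!nth0 -[X in nth x p X]i0 -[X in nth x q X]j0 nth_index.
Qed.

Hypothesis acyclic :
  ~ exists x p, [/\ uniq (x :: p), 1 < size p, path r x p & r (last x p) x].

Lemma first_step_unique x y z z' : first_step x y z -> first_step x y z' -> z = z'.
Proof.
move=> sz sz'; have [yx | yx] := eqVneq y x.
  by move: sz sz'; rewrite yx => /first_step_refl -> /first_step_refl ->.
case: sz sz' => p [up pp <- lp] [q [uq pq <- lq]].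
have np : p != [::] by rewrite -(uniq_last_eq up) lp.
have nq : q != [::] by rewrite -(uniq_last_eq uq) lq.
apply/eqP/negPn/negP => hne; apply: acyclic.
have [c cyc] := diverging_paths_cycle up uq pp pq np nq (etrans lp (esym lq)) hne.
by exists x, c.
Qed.

Hypothesis connected : forall x y, connect r x y.

Lemma first_step_sides x z y :
  x != z -> r x z -> first_step x y z <-> ~ first_step z y x.
Proof.
move=> xz rxz; split.
- case=> -[|a p] [up pp /= za ly]; first by rewrite za eqxx in xz.
  subst a; case/andP: up => xp up; case/andP: pp => _ pp zyx.
  have [p0 | np] := eqVneq p [::].
    rewrite p0 /= in ly; rewrite -ly in zyx.
    by rewrite (first_step_refl zyx) eqxx in xz.
  have zyh : first_step z y (head z p) by exists p.
  move: xp; rewrite (first_step_unique zyx zyh) inE negb_or => /andP [_].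
  by case: p np {up pp ly zyh} => // a s _; rewrite inE eqxx.
- move=> nzyx; have [h [q [uq pq hq lq]]] := first_step_exists (connected z y).
  case xq: (x \in q).
    have zxx : first_step z x x by apply: first_step_edge; rewrite 1?eq_sym // rsym.
    case: nzyx; rewrite -(first_step_unique (first_step_prefix uq pq xq) zxx).
    by exists q.
  by exists (z :: q); rewrite cons_uniq uq inE negb_or xz xq /= rxz pq.
Qed.

End SimplePaths.

Section HypertreeWeights.
Variables (E V : finType) (Gamma : {set E * V}) (Es : V -> E -> {set E}).
Hypotheses (conn : bconnected Gamma) (acyc : ~ has_cycle Gamma).
Hypothesis Es_spec : forall v e0, (e0, v) \in Gamma -> path_start_set Gamma v e0 (Es v e0).

Lemma badj_sym : symmetric (badj Gamma).
Proof. by case=> [a|a] [b|b]. Qed.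

Let sides := first_step_sides badj_sym acyc conn.
Let unique := first_step_unique badj_sym acyc.

Lemma mem_Es v e0 e :
  (e0, v) \in Gamma -> e \in Es v e0 <-> first_step (badj Gamma) (inr v) (inl e) (inl e0).
Proof. by move=> g; apply: (Es_spec g). Qed.

Lemma first_step_inr v y : inr v != y ->
  exists2 e0, (e0, v) \in Gamma & first_step (badj Gamma) (inr v) y (inl e0).
Proof.
move=> vy; have [z vyz] := first_step_exists (conn (inr v) y).
have := first_step_adj vy vyz; case: z vyz => // e0 vyz g.
by exists e0.
Qed.

Lemma first_step_inl e y : inl e != y ->
  exists2 v, (e, v) \in Gamma & first_step (badj Gamma) (inl e) y (inr v).
Proof.
move=> ey; have [z eyz] := first_step_exists (conn (inl e) y).
have := first_step_adj ey eyz; case: z eyz => // v eyz g.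
by exists v.
Qed.

Lemma degE_gt0 e : (0 < #|V|)%N -> (0 < degE Gamma e)%N.
Proof.
case/card_gt0P => v0 _; have [v g _] := @first_step_inl e (inr v0) isT.
by apply/card_gt0P; exists v; rewrite inE.
Qed.

Lemma card_Es_cover v e : #|[set e0 | (e0, v) \in Gamma & e \in Es v e0]| = 1%N.
Proof.
have [e1 g1 s1] := @first_step_inr v (inl e) isT.
apply/eqP/cards1P; exists e1; apply/setP => e0; rewrite !inE.
apply/andP/eqP => [[g0 /(mem_Es _ g0) s0] | ->]; last by split; last exact/(mem_Es _ g1).
by case: (unique s0 s1).
Qed.

Lemma notin_Es v e' e : (e', v) \in Gamma ->
  e \notin Es v e' <-> first_step (badj Gamma) (inl e') (inl e) (inr v).
Proof.
move=> g; have [to_side from_side] := @sides (inl e') (inr v) (inl e) isT g.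
split=> [/negP nE | /to_side s]; first by apply: from_side => /(mem_Es _ g).
by apply/negP => /(mem_Es _ g).
Qed.

Lemma card_Es_miss e' e : #|[set v | (e', v) \in Gamma & e \notin Es v e']| = (e != e').
Proof.
have [-> | ne] := eqVneq e e'.
  apply/eqP; rewrite cards_eq0; apply/eqP/setP => v; rewrite !inE.
  by apply/andP => -[g /(notin_Es _ g) /first_step_refl].
have e'e : inl e' != inl e :> E + V by apply: contraNneq ne => -[->].
have [v1 g1 s1] := first_step_inl e'e.
apply/eqP/cards1P; exists v1; apply/setP => v; rewrite !inE.
apply/andP/eqP => [[g /(notin_Es _ g) s] | ->]; last by split; last exact/(notin_Es _ g1).
by case: (unique s s1).
Qed.

Lemma card_Es_hit e' e : (0 < degE Gamma e')%N ->
  #|[set v | (e', v) \in Gamma & e \in Es v e']| = ((degE Gamma e').-1 + (e == e'))%N.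
Proof.
have : (#|[set v | (e', v) \in Gamma & e \in Es v e']|
        + #|[set v | (e', v) \in Gamma & e \notin Es v e']|)%N = degE Gamma e'.
  rewrite /degE -[RHS](cardsID [set v | e \in Es v e']).
  by congr (_ + _)%N; apply: eq_card => v; rewrite !inE // andbC.
by rewrite card_Es_miss; case: (eqVneq e e') => _ /=; lia.
Qed.

Lemma sum_card_Es_at v : (\sum_(e0 | (e0, v) \in Gamma) #|Es v e0|)%N = #|E|.
Proof.
rewrite sum_card_exchange (eq_bigr (fun=> 1%N)) ?sum1_card // => e _.
exact: card_Es_cover.
Qed.

Lemma sum_card_Es_through e' : (0 < #|V|)%N ->
  (\sum_(v | (e', v) \in Gamma) #|Es v e'|)%N = (hypertree_of Gamma e' * #|E| + 1)%N.
Proof.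
move=> V0; rewrite sum_card_exchange.
rewrite (eq_bigr _ (fun e _ => card_Es_hit e (degE_gt0 e' V0))) big_split /=.
rewrite sum_nat_const mulnC (bigD1 e') //= eqxx big1 ?addn0 // => e /negbTE -> //.
Qed.

End HypertreeWeights.

Local Open Scope ring_scope.

Theorem lemma3p13 (R : realFieldType) (E V : finType) (G Gamma : {set E * V})
  (Es : V -> E -> {set E}) :
  (0 < #|E|)%N -> (0 < #|V|)%N ->
  bconnected G ->
  spanning_tree G Gamma ->
  (forall v e0, (e0, v) \in Gamma -> path_start_set Gamma v e0 (Es v e0)) ->
  let w (eps : E * V) : R := (#|Es eps.2 eps.1|)%:R / (#|E|)%:R in
  let fplus (e : E) : R := (hypertree_of Gamma e)%:R + 1 / (#|E|)%:R in
  (forall v : V,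
     (forall e, (e, v) \in Gamma -> 0 <= w (e, v)) /\
     \sum_(e | (e, v) \in Gamma) w (e, v) = 1) /\
  (fun e' : E => \sum_(v : V) \sum_(e | (e, v) \in Gamma)
                    w (e, v) * (e == e')%:R) = fplus.
Proof.
move=> E0 V0 _ [_ conn acyc] Es_spec w fplus.
have nE : (#|E|%:R : R) != 0 by rewrite pnatr_eq0 -lt0n.
split=> [v|].
  split=> [e _|]; first by rewrite divr_ge0 ?ler0n.
  by rewrite -mulr_suml -natr_sum (sum_card_Es_at conn acyc Es_spec) divff.
apply: functional_extensionality => e'.
under eq_bigr do rewrite big_mul_delta.
rewrite -big_mkcond /= -mulr_suml -natr_sum.
by rewrite (sum_card_Es_through conn acyc Es_spec) // natrD natrM mulrDl mulfK.
Qed.
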